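(* Let $T$ be a triangle from a shape-regular family ($h_T\le\varrho r_T$), $\Gamma_{h,T}$ an open line segment with endpoints on $\partial T$ dividing $T$ into nonempty open parts $T_h^\pm$, and $\mu^\pm>0$. There is a constant $C>0$ independent of $h_T$ and of the location of $\Gamma_{h,T}$ such that $$\|\nabla\mathbf{v}_h\|_{L^2(\partial T)}\le Ch_T^{-1/2}\|\nabla\mathbf{v}_h\|_{L^2(T)}\qquad\forall(\mathbf{v}_h,q_h)\in\mathbf{V}M_h^{IFE}(T).$$
   Context: $\mathbf{n}_h$ is the unit normal of $\Gamma_{h,T}$ pointing into $T_h^+$; $\sigma(\mu,\mathbf{v},q)=2\mu\boldsymbol{\epsilon}(\mathbf{v})-q\mathbb{I}$, $\boldsymbol{\epsilon}(\mathbf{v})=\frac12(\nabla\mathbf{v}+(\nabla\mathbf{v})^T)$. $\mathbf{V}M_h^{IFE}(T)$ is the set of pairs $(\mathbf{v},q)$ equal to $(\mathbf{v}^\pm,q^\pm)$ on $T_h^\pm$, where $\mathbf{v}^\pm\in P_1(T)^2$, $q^\pm\in P_0(T)$ satisfy $\sigma(\mu^+,\mathbf{v}^+,q^+)\mathbf{n}_h=\sigma(\mu^-,\mathbf{v}^-,q^-)\mathbf{n}_h$, $\mathbf{v}^+=\mathbf{v}^-$ on $\Gamma_{h,T}$, $\nabla\cdot\mathbf{v}^+=\nabla\cdot\mathbf{v}^-$. On $\partial T$, $\nabla\mathbf{v}_h$ is the trace of the piecewise constant gradient. *)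

From HB Require Import structures.
From mathcomp Require Import all_boot all_order all_algebra.
From mathcomp Require Import all_classical all_reals all_analysis.
Set Implicit Arguments. Unset Strict Implicit. Unset Printing Implicit Defensive.
Import Order.TTheory GRing.Theory Num.Theory.
Import numFieldNormedType.Exports.
Local Open Scope classical_set_scope.
Local Open Scope ring_scope.

Section IFE.
Variable R : realType.

Definition pt := (R * R)%type.
Definition padd (p q : pt) : pt := (p.1 + q.1, p.2 + q.2).
Definition psub (p q : pt) : pt := (p.1 - q.1, p.2 - q.2).
Definition pscale (t : R) (p : pt) : pt := (t * p.1, t * p.2).
Definition dot (p q : pt) : R := p.1 * q.1 + p.2 * q.2.
Definition enorm (p : pt) : R := Num.sqrt (dot p p).
Definition det2 (p q : pt) : R := p.1 * q.2 - p.2 * q.1.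

Definition tri_nondeg (a b c : pt) : Prop := det2 (psub b a) (psub c a) != 0.

Definition tri (a b c : pt) : set pt :=
  [set x | exists l1 l2 l3 : R, [/\ 0 < l1, 0 < l2, 0 < l3, l1 + l2 + l3 = 1 &
       x = padd (pscale l1 a) (padd (pscale l2 b) (pscale l3 c))]].

Definition hT (a b c : pt) : R :=
  sup [set d | exists x y, [/\ tri a b c x, tri a b c y & d = enorm (psub x y)]].

Definition rT (a b c : pt) : R :=
  sup [set r | 0 < r /\ exists z : pt,
          [set y | enorm (psub y z) < r] `<=` tri a b c].

Definition side (x0 n x : pt) : R := dot (psub x x0) n.
Definition Tplus (a b c x0 n : pt) : set pt := tri a b c `&` [set x | 0 < side x0 n x].
Definition Tminus (a b c x0 n : pt) : set pt := tri a b c `&` [set x | side x0 n x < 0].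
Definition Gamma (a b c x0 n : pt) : set pt := tri a b c `&` [set x | side x0 n x = 0].

(* affine (P1)^2 map x |-> A x + b ; A is its (constant) gradient, A i j = d v_i / d x_j *)
Definition affine (A : 'M[R]_2) (b : pt) (x : pt) : pt :=
  (A 0 0 * x.1 + A 0 1 * x.2 + b.1, A 1 0 * x.1 + A 1 1 * x.2 + b.2).
Definition mxapp (M : 'M[R]_2) (p : pt) : pt :=
  (M 0 0 * p.1 + M 0 1 * p.2, M 1 0 * p.1 + M 1 1 * p.2).
(* sigma(mu, v, q) = 2 mu eps(v) - q I = mu (grad v + grad v^T) - q I *)
Definition stress (mu : R) (A : 'M[R]_2) (q : R) : 'M[R]_2 :=
  mu *: (A + A^T) - q%:M.

(* (v, q) in VM_h^IFE(T): v = A+ x + b+, q = q+ on T^+, v = A- x + b-, q = q- on T^- *)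
Definition IFE (mup mum : R) (a b c x0 n : pt)
    (Ap : 'M[R]_2) (bp : pt) (qp : R) (Am : 'M[R]_2) (bm : pt) (qm : R) : Prop :=
  [/\ mxapp (stress mup Ap qp) n = mxapp (stress mum Am qm) n,
      (forall x, Gamma a b c x0 n x -> affine Ap bp x = affine Am bm x) &
      \tr Ap = \tr Am].

(* piecewise constant gradient (also used for its trace on the boundary) *)
Definition gradv (x0 n : pt) (Ap Am : 'M[R]_2) (x : pt) : 'M[R]_2 :=
  if 0 < side x0 n x then Ap else Am.

Definition frob2 (A : 'M[R]_2) : R := \sum_(i < 2) \sum_(j < 2) A i j ^+ 2.

Definition leb2 := ((@lebesgue_measure R) \x (@lebesgue_measure R))%E.

Definition L2T (a b c : pt) (f : pt -> R) : R :=
  Num.sqrt (\int[leb2]_(x in tri a b c) (f x ^+ 2)).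

Definition seg_int (p q : pt) (f : pt -> R) : R :=
  enorm (psub q p) *
    \int[@lebesgue_measure R]_(t in `[0, 1]) f (padd p (pscale t (psub q p))).

Definition L2bdT (a b c : pt) (f : pt -> R) : R :=
  Num.sqrt (seg_int a b (fun x => f x ^+ 2) + seg_int b c (fun x => f x ^+ 2)
            + seg_int c a (fun x => f x ^+ 2)).

Definition gradnorm (x0 n : pt) (Ap Am : 'M[R]_2) (x : pt) : R :=
  Num.sqrt (frob2 (gradv x0 n Ap Am x)).

End IFE.

(* On each side of the interface the gradient is a constant matrix, [A+] or [A-]. Continuity
   of [v] across [Gamma] gives [(A+ - A-) t = 0] for the tangent [t], and equal divergences give
   [tr (A+ - A-) = 0], so the jump is [s t n^T] where [s] is the jump of the shear rate
   [t.(A + A^T) n]. The traction condition makes [mu] times the shear rate continuous, so [s]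
   is a fixed multiple of the shear rate of [A-], and [|A+|^2 <= K |A-|^2] and conversely with
   [K] depending only on the viscosities, wherever [Gamma] cuts [T]. Hence [|grad v|^2] takes
   values in [[m, K m]]: its boundary integral is at most [6 h_T K m], and its integral over
   [T] is at least [m] times the area of a square in the inscribed disc, which by shape
   regularity is of order [h_T^2 / rho^2]. *)

From HB Require Import structures.
From mathcomp Require Import all_boot all_order all_algebra.
From mathcomp Require Import all_classical all_reals all_analysis.
From mathcomp Require Import ring lra.
Import Order.TTheory GRing.Theory Num.Theory.
Local Open Scope classical_set_scope.
Local Open Scope ring_scope.
Set Implicit Arguments. Unset Strict Implicit. Unset Printing Implicit Defensive.

Section StressJump.
Variable R : realType.
Implicit Types (A B : 'M[R]_2) (n u v : pt R).

Definition perp n : pt R := (- n.2, n.1).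

Lemma sum_ord2 (F : 'I_2 -> R) : \sum_(i < 2) F i = F 0 + F 1.
Proof. by rewrite !big_ord_recl big_ord0 addr0; congr (F _ + F _); apply: val_inj. Qed.

Lemma frob2E A : frob2 A = A 0 0 ^+ 2 + A 0 1 ^+ 2 + A 1 0 ^+ 2 + A 1 1 ^+ 2.
Proof. by rewrite /frob2 !sum_ord2 addrA. Qed.

Lemma mxtrace2E A : \tr A = A 0 0 + A 1 1.
Proof. by rewrite /mxtrace sum_ord2. Qed.

Lemma frob2_ge0 A : 0 <= frob2 A.
Proof. by rewrite frob2E !addr_ge0 ?sqr_ge0. Qed.

Lemma frob2D_le A B : frob2 (A + B) <= 2 * (frob2 A + frob2 B).
Proof.
rewrite !frob2E !mxE -subr_ge0.
set d := (X in 0 <= X).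
have -> : d = (A 0 0 - B 0 0) ^+ 2 + (A 0 1 - B 0 1) ^+ 2
            + (A 1 0 - B 1 0) ^+ 2 + (A 1 1 - B 1 1) ^+ 2 by rewrite /d; ring.
by rewrite !addr_ge0 ?sqr_ge0.
Qed.

Lemma mxappB A B v : mxapp (A - B) v = psub (mxapp A v) (mxapp B v).
Proof. by rewrite /mxapp /psub !mxE /=; congr pair; ring. Qed.

Lemma dotBr u v w : dot u (psub v w) = dot u v - dot u w.
Proof. by rewrite /dot /psub /=; ring. Qed.

(* Parseval in the orthogonal, not normalised, frame [(n, perp n)]. *)
Lemma frob2_frame A n : frob2 A * dot n n ^+ 2 =
  dot n (mxapp A n) ^+ 2 + dot n (mxapp A (perp n)) ^+ 2
  + dot (perp n) (mxapp A n) ^+ 2 + dot (perp n) (mxapp A (perp n)) ^+ 2.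
Proof. by rewrite frob2E /dot /mxapp /perp /=; ring. Qed.

Lemma mxtrace_frame A n :
  \tr A * dot n n = dot n (mxapp A n) + dot (perp n) (mxapp A (perp n)).
Proof. by rewrite mxtrace2E /dot /mxapp /perp /=; ring. Qed.

Definition shear n A := dot (perp n) (mxapp A n) + dot n (mxapp A (perp n)).

Lemma dot_perp_stress mu A q n :
  dot (perp n) (mxapp (stress mu A q) n) = mu * shear n A.
Proof. by rewrite /shear /dot /mxapp /perp /stress !mxE /= mulr1n mulr0n; ring. Qed.

Lemma shear_sqr_le n A : dot n n = 1 -> shear n A ^+ 2 <= 2 * frob2 A.
Proof.
move=> n1; have := frob2_frame A n; rewrite n1 expr1n mulr1 /shear => ->.
set x := dot (perp n) _; set y := dot n (mxapp A (perp n)).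
have := sqr_ge0 (x - y); have := sqr_ge0 (dot n (mxapp A n)).
have := sqr_ge0 (dot (perp n) (mxapp A (perp n))); nra.
Qed.

Lemma frob2_jump A B n : dot n n = 1 ->
  mxapp A (perp n) = mxapp B (perp n) -> \tr A = \tr B ->
  frob2 (A - B) = (shear n A - shear n B) ^+ 2.
Proof.
move=> n1 eAB trAB.
have := frob2_frame (A - B) n; rewrite n1 expr1n mulr1 => ->.
have := mxtrace_frame (A - B) n; rewrite n1 mulr1 raddfB /= trAB subrr.
rewrite !mxappB eAB !dotBr !subrr addr0 => <-.
by rewrite /shear eAB expr0n /= !add0r addr0; congr (_ ^+ 2); ring.
Qed.

Definition jump_ratio (mup mum : R) := 2 + 4 * ((mum - mup) / mup) ^+ 2.

Lemma jump_ratio_ge2 mup mum : 2 <= jump_ratio mup mum.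
Proof. by rewrite /jump_ratio lerDl mulr_ge0 ?sqr_ge0. Qed.

Lemma frob2_le_jump_ratio mup mum A B qA qB n :
  0 < mup -> dot n n = 1 ->
  mxapp (stress mup A qA) n = mxapp (stress mum B qB) n ->
  mxapp A (perp n) = mxapp B (perp n) -> \tr A = \tr B ->
  frob2 A <= jump_ratio mup mum * frob2 B.
Proof.
move=> mup0 n1 eS eT trAB.
set k := (mum - mup) / mup.
have eshear : shear n A - shear n B = k * shear n B.
  have e : mup * shear n A = mum * shear n B.
    by rewrite -(dot_perp_stress mup A qA n) -(dot_perp_stress mum B qB n) eS.
  apply: (mulfI (lt0r_neq0 mup0)).
  by rewrite /k mulrA mulrCA divff ?lt0r_neq0 // mulrBr e; ring.
have jump_le : frob2 (A - B) <= 2 * k ^+ 2 * frob2 B.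
  rewrite (frob2_jump n1 eT trAB) eshear exprMn -mulrA (mulrCA 2).
  by rewrite ler_wpM2l ?sqr_ge0 // shear_sqr_le.
have := frob2D_le B (A - B); rewrite addrC subrK => /le_trans; apply.
have -> : jump_ratio mup mum * frob2 B = 2 * (frob2 B + 2 * k ^+ 2 * frob2 B).
  by rewrite /jump_ratio -/k; ring.
by rewrite ler_wpM2l // lerD2l.
Qed.

End StressJump.

Section Interface.
Variable R : realType.
Implicit Types (a b c p q x v : pt R) (A : 'M[R]_2).

Lemma tri_convex a b c p q (s t : R) : 0 < s -> 0 < t -> s + t = 1 ->
  tri a b c p -> tri a b c q -> tri a b c (padd (pscale s p) (pscale t q)).
Proof.
move=> s0 t0 st [l1 [l2 [l3 [l10 l20 l30 ls ->]]]] [k1 [k2 [k3 [k10 k20 k30 ks ->]]]].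
exists (s * l1 + t * k1), (s * l2 + t * k2), (s * l3 + t * k3); split.
- by rewrite addr_gt0 ?mulr_gt0.
- by rewrite addr_gt0 ?mulr_gt0.
- by rewrite addr_gt0 ?mulr_gt0.
- have -> : s * l1 + t * k1 + (s * l2 + t * k2) + (s * l3 + t * k3)
            = s * (l1 + l2 + l3) + t * (k1 + k2 + k3) by ring.
  by rewrite ls ks !mulr1.
- by rewrite /padd /pscale /=; congr pair; ring.
Qed.

Lemma side_comb x0 n p q (s t : R) : s + t = 1 ->
  side x0 n (padd (pscale s p) (pscale t q)) = s * side x0 n p + t * side x0 n q.
Proof.
move=> st; have -> : t = 1 - s by lra.
by rewrite /side /dot /psub /padd /pscale /=; ring.
Qed.

Lemma Gamma_nonempty a b c x0 n :
  Tplus a b c x0 n !=set0 -> Tminus a b c x0 n !=set0 -> Gamma a b c x0 n !=set0.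
Proof.
move=> [p [Tp /= sp]] [q [Tq /= sq]].
have d0 : side x0 n p - side x0 n q != 0 by rewrite lt0r_neq0 // subr_gt0 (lt_trans sq).
set s := - side x0 n q / (side x0 n p - side x0 n q).
set t := side x0 n p / (side x0 n p - side x0 n q).
have st : s + t = 1 by rewrite /s /t; field.
exists (padd (pscale s p) (pscale t q)); split.
- apply: tri_convex => //; rewrite divr_gt0 ?oppr_gt0 ?subr_gt0 //; exact: lt_trans sq sp.
- by rewrite /= side_comb // /s /t; field.
Qed.

(* Cramer's rule in the frame [(b - a, c - a)]. *)
Lemma dir_coords a b c v : tri_nondeg a b c -> exists be1 be2 be3 : R,
  be1 + be2 + be3 = 0 /\ v = padd (pscale be1 a) (padd (pscale be2 b) (pscale be3 c)).
Proof.
rewrite /tri_nondeg => nd.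
set D := det2 (psub b a) (psub c a) in nd.
exists (- (det2 v (psub c a) / D) - det2 (psub b a) v / D), (det2 v (psub c a) / D),
       (det2 (psub b a) v / D); split; first by ring.
rewrite /padd /pscale /D /det2 /psub /= in nd *.
by case: v => v1 v2 /=; congr pair; field.
Qed.

Lemma lt0_perturb (w m be G : R) : 0 < m -> m <= w -> `|be| < G -> 0 < w + m / G * be.
Proof.
move=> m0 mw beG.
have G0 : 0 < G by apply: le_lt_trans beG.
have small : m / G * `|be| < m by rewrite mulrAC ltr_pdivrMr // ltr_pM2l.
have : - (m / G * `|be|) <= m / G * be.
  by rewrite -mulrN ler_wpM2l ?divr_ge0 ?(ltW m0) ?(ltW G0) // lerNl -normrN ler_norm.
lra.
Qed.

Lemma tri_open_dir a b c x v : tri_nondeg a b c -> tri a b c x ->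
  exists2 e : R, 0 < e & tri a b c (padd x (pscale e v)).
Proof.
move=> nd [w1 [w2 [w3 [w10 w20 w30 ws ->]]]].
have [be1 [be2 [be3 [bes ->]]]] := dir_coords v nd.
set m := Num.min w1 (Num.min w2 w3).
set G := 1 + `|be1| + `|be2| + `|be3|.
have m0 : 0 < m by rewrite !lt_min w10 w20 w30.
have := normr_ge0 be1; have := normr_ge0 be2; have := normr_ge0 be3 => n3 n2 n1.
have G0 : 0 < G by rewrite /G; lra.
exists (m / G); first by rewrite divr_gt0.
exists (w1 + m / G * be1), (w2 + m / G * be2), (w3 + m / G * be3); split.
- by apply: lt0_perturb; rewrite /m ?ge_min ?lexx //= /G; lra.
- by apply: lt0_perturb; rewrite /m ?ge_min ?lexx ?orbT //= /G; lra.
- by apply: lt0_perturb; rewrite /m ?ge_min ?lexx ?orbT //= /G; lra.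
- have -> : w1 + m / G * be1 + (w2 + m / G * be2) + (w3 + m / G * be3)
            = w1 + w2 + w3 + m / G * (be1 + be2 + be3) by ring.
  by rewrite ws bes mulr0 addr0.
- by rewrite /padd /pscale /=; congr pair; ring.
Qed.

Lemma affine_sub A b x y : psub (affine A b x) (affine A b y) = mxapp A (psub x y).
Proof. by rewrite /psub /affine /mxapp /=; congr pair; ring. Qed.

Lemma mxappZ A (e : R) v : mxapp A (pscale e v) = pscale e (mxapp A v).
Proof. by rewrite /mxapp /pscale /=; congr pair; ring. Qed.

Lemma pscaleK (e : R) : e != 0 -> cancel (pscale e) (pscale e^-1).
Proof. by move=> e0 [v1 v2]; rewrite /pscale /= !mulrA mulVf // !mul1r. Qed.

Lemma mxapp_eq_of_affine_eq (Ap Am : 'M[R]_2) bp bm x v (e : R) : e != 0 ->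
  affine Ap bp x = affine Am bm x ->
  affine Ap bp (padd x (pscale e v)) = affine Am bm (padd x (pscale e v)) ->
  mxapp Ap v = mxapp Am v.
Proof.
move=> e0 ex exv; apply: (can_inj (pscaleK e0)); rewrite -!mxappZ.
have <- : psub (padd x (pscale e v)) x = pscale e v.
  by rewrite /psub /padd /=; congr pair; ring.
by rewrite -(affine_sub Ap bp) -(affine_sub Am bm) ex exv.
Qed.

(* Compare [v] at two points of [Gamma] a multiple of [perp n] apart: one is a convex
   combination of points of [T^+] and [T^-], the other exists because [T] is open. *)
Lemma tangential_grad_eq a b c x0 n (Ap Am : 'M[R]_2) bp bm :
  tri_nondeg a b c -> Tplus a b c x0 n !=set0 -> Tminus a b c x0 n !=set0 ->
  (forall x, Gamma a b c x0 n x -> affine Ap bp x = affine Am bm x) ->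
  mxapp Ap (perp n) = mxapp Am (perp n).
Proof.
move=> nd Tp Tm cont.
have [g [Tg /= sg]] := Gamma_nonempty Tp Tm.
have [e e0 Tge] := tri_open_dir (perp n) nd Tg.
apply: (mxapp_eq_of_affine_eq (lt0r_neq0 e0) (cont g _)); first by split.
apply: cont; split => //=.
by rewrite -sg /side /dot /psub /padd /pscale /perp /=; ring.
Qed.

End Interface.

Section NonnegIntegral.
Context d (T : measurableType d) (R : realType) (mu : {measure set T -> \bar R}).
Implicit Types (D : set T) (f : T -> R).

(* No measurability is needed: both sides are suprema of integrals of simple minorants. *)
Lemma ge0_le_integral_subset D1 D2 f1 f2 :
  (forall x, D1 x -> 0 <= f1 x) -> (forall x, D2 x -> 0 <= f2 x) ->
  D1 `<=` D2 -> (forall x, D1 x -> f1 x <= f2 x) ->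
  (\int[mu]_(x in D1) (f1 x)%:E <= \int[mu]_(x in D2) (f2 x)%:E)%E.
Proof.
move=> f10 f20 D12 f12.
rewrite !ge0_integralE => [|x /f20|x /f10]; rewrite ?lee_fin //.
apply: ereal_sup_le => _ [h hf <-]; exists h => //= x.
apply: le_trans (hf x) _; rewrite !patchE.
case: ifPn => [/set_mem D1x|_]; first by rewrite ifT ?lee_fin ?f12 //; apply/mem_set/D12.
by case: ifPn => [/set_mem /f20|_]; rewrite ?lee_fin.
Qed.

Lemma integral_le_cst D1 D2 f (M : R) : measurable D2 -> D1 `<=` D2 -> 0 <= M ->
  (forall x, D1 x -> 0 <= f x <= M) -> (\int[mu]_(x in D1) (f x)%:E <= M%:E * mu D2)%E.
Proof.
move=> mD2 D12 M0 fM; rewrite -(integral_cst mu mD2).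
by apply: ge0_le_integral_subset => // x /fM /andP[].
Qed.

Lemma cst_le_integral D1 D2 f (m : R) : measurable D1 -> D1 `<=` D2 -> 0 <= m ->
  (forall x, D2 x -> 0 <= f x) -> (forall x, D1 x -> m <= f x) ->
  (m%:E * mu D1 <= \int[mu]_(x in D2) (f x)%:E)%E.
Proof.
move=> mD1 D12 m0 f0 mf; rewrite -(integral_cst mu mD1).
exact: ge0_le_integral_subset.
Qed.

End NonnegIntegral.

Lemma fine_bounds (R : realType) (x y : R) (I : \bar R) :
  (x%:E <= I)%E -> (I <= y%:E)%E -> x <= fine I <= y.
Proof. by case: I => [r| |] //=; rewrite !lee_fin => -> ->. Qed.

Lemma lebesgue_measure_itv_cc (R : realType) (x y : R) : x <= y ->
  lebesgue_measure (`[x, y] : set R) = (y - x)%:E.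
Proof.
move=> xy; rewrite lebesgue_measure_itv /= lte_fin.
by case: ltgtP xy => // -> _; rewrite subrr.
Qed.

Lemma leb2_rectangle (R : realType) (x1 y1 x2 y2 : R) : x1 <= y1 -> x2 <= y2 ->
  @leb2 R (`[x1, y1] `*` `[x2, y2]) = ((y1 - x1) * (y2 - x2))%:E.
Proof.
move=> le1 le2; rewrite /leb2 product_measure1E // EFinM.
by congr (_ * _)%E; apply: lebesgue_measure_itv_cc.
Qed.

Section TriangleMetric.
Variable R : realType.
Implicit Types (a b c p q x y z v : pt R).

Lemma enorm_scale (k : R) v : 0 <= k -> enorm (pscale k v) = k * enorm v.
Proof.
move=> k0; rewrite /enorm /dot /pscale /=.
have -> : k * v.1 * (k * v.1) + k * v.2 * (k * v.2) = k ^+ 2 * (v.1 * v.1 + v.2 * v.2) by ring.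
by rewrite sqrtrM ?sqr_ge0 // sqrtr_sqr ger0_norm.
Qed.

Lemma enorm_le_l1 v : enorm v <= `|v.1| + `|v.2|.
Proof.
rewrite /enorm -(ger0_norm (addr_ge0 (normr_ge0 v.1) (normr_ge0 v.2))) -sqrtr_sqr.
rewrite ler_sqrt ?sqr_ge0 // /dot -!expr2 -(real_normK (num_real v.1)) -(real_normK (num_real v.2)).
have := normr_ge0 v.1; have := normr_ge0 v.2; nra.
Qed.

Lemma norm_convex3_le (l1 l2 l3 u1 u2 u3 : R) :
  0 < l1 -> 0 < l2 -> 0 < l3 -> l1 + l2 + l3 = 1 ->
  `|l1 * u1 + (l2 * u2 + l3 * u3)| <= `|u1| + `|u2| + `|u3|.
Proof.
move=> l10 l20 l30 ls.
have le_norm (k u : R) : 0 < k -> k <= 1 -> `|k * u| <= `|u|.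
  by move=> k0 k1; rewrite normrM gtr0_norm // ler_piMl.
have [l11 l21 l31] : [/\ l1 <= 1, l2 <= 1 & l3 <= 1] by split; lra.
have := le_norm _ u1 l10 l11; have := le_norm _ u2 l20 l21; have := le_norm _ u3 l30 l31.
have := ler_normD (l1 * u1) (l2 * u2 + l3 * u3); have := ler_normD (l2 * u2) (l3 * u3).
lra.
Qed.

Definition vert_bound a b c := `|a.1| + `|b.1| + `|c.1| + `|a.2| + `|b.2| + `|c.2|.

Lemma tri_bounded a b c x : tri a b c x ->
  `|x.1| <= vert_bound a b c /\ `|x.2| <= vert_bound a b c.
Proof.
case=> l1 [l2 [l3 [l10 l20 l30 ls ->]]]; rewrite /vert_bound /padd /pscale /=.
have := norm_convex3_le a.1 b.1 c.1 l10 l20 l30 ls.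
have := norm_convex3_le a.2 b.2 c.2 l10 l20 l30 ls.
have := normr_ge0 a.1; have := normr_ge0 b.1; have := normr_ge0 c.1.
have := normr_ge0 a.2; have := normr_ge0 b.2; have := normr_ge0 c.2.
move=> *; split; lra.
Qed.

Lemma enorm_le_hT a b c x y : tri a b c x -> tri a b c y -> enorm (psub x y) <= hT a b c.
Proof.
move=> Tx Ty; apply: ub_le_sup; last by exists x, y.
exists (4 * vert_bound a b c) => _ [x' [y' [Tx' Ty' ->]]].
have [x1 x2] := tri_bounded Tx'; have [y1 y2] := tri_bounded Ty'.
apply: le_trans (enorm_le_l1 _) _; rewrite /psub /=.
have := ler_normB x'.1 y'.1; have := ler_normB x'.2 y'.2; lra.
Qed.

Lemma tri_rot a b c : tri a b c = tri b c a.
Proof.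
suff sub a' b' c' : tri a' b' c' `<=` tri b' c' a'.
  by apply/seteqP; split => // x /sub /sub.
move=> _ [l1 [l2 [l3 [l10 l20 l30 ls ->]]]]; exists l2, l3, l1; split => //.
- by rewrite -ls; ring.
- by rewrite /padd /pscale /=; congr pair; ring.
Qed.

Lemma hT_rot a b c : hT a b c = hT b c a.
Proof. by rewrite /hT tri_rot. Qed.

(* Two interior points whose difference is half the edge [b - a]. *)
Lemma edge_le_hT a b c : enorm (psub b a) <= 2 * hT a b c.
Proof.
have w1 : (0 : R) < 6^-1 by rewrite invr_gt0 ltr0n.
have w2 : (0 : R) < 2 / 3 by rewrite divr_gt0 ?ltr0n.
have Tx : tri a b c (padd (pscale 6^-1 a) (padd (pscale (2 / 3) b) (pscale 6^-1 c))).
  by exists 6^-1, (2 / 3), 6^-1; split => //; field.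
have Ty : tri a b c (padd (pscale (2 / 3) a) (padd (pscale 6^-1 b) (pscale 6^-1 c))).
  by exists (2 / 3), 6^-1, 6^-1; split => //; field.
have := enorm_le_hT Tx Ty.
have -> : psub (padd (pscale 6^-1 a) (padd (pscale (2 / 3) b) (pscale 6^-1 c)))
               (padd (pscale (2 / 3) a) (padd (pscale 6^-1 b) (pscale 6^-1 c)))
          = pscale 2^-1 (psub b a).
  by rewrite /psub /padd /pscale /=; congr pair; field.
rewrite enorm_scale ?invr_ge0 ?ler0n //; lra.
Qed.

Lemma hT_gt0 a b c : tri_nondeg a b c -> 0 < hT a b c.
Proof.
move=> nd; suff : 0 < enorm (psub b a) by have := edge_le_hT a b c; lra.
rewrite /enorm sqrtr_gt0 ltNge; apply/negP => le0; move: nd.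
rewrite /tri_nondeg /det2 /dot /psub /= in le0 *.
move: (b.1 - a.1) (b.2 - a.2) le0 => u v le0.
have -> : u = 0 by nra.
have -> : v = 0 by nra.
by rewrite !mul0r subrr eqxx.
Qed.

Lemma rT_disc a b c : 0 < rT a b c -> exists r z,
  [/\ rT a b c < 2 * r, 0 < r & [set y | enorm (psub y z) < r] `<=` tri a b c].
Proof.
rewrite /rT; set S := (X in sup X) => S0.
have [[r Sr]|S_empty] := pselect (S !=set0); last first.
  by move: S0; rewrite (_ : S = set0) ?sup0 ?ltxx // -subset0 => x Sx; apply: S_empty; exists x.
have half : sup S / 2 < sup S by lra.
have [r' [r'0 [z disc]] lt_r'] := sup_gt (ex_intro _ r Sr) half.
by exists r', z; split => //; lra.
Qed.

Lemma square_sub_disc z (r : R) : 0 < r ->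
  `[z.1 - r / 2, z.1 + r / 2] `*` `[z.2 - r / 2, z.2 + r / 2]
    `<=` [set y | enorm (psub y z) < r].
Proof.
move=> r0 y [/=]; rewrite !in_itv /= => /andP[l1 u1] /andP[l2 u2].
rewrite /enorm -(gtr0_norm r0) -sqrtr_sqr ltr_sqrt ?exprn_gt0 // /dot /psub /=.
nra.
Qed.

Lemma tri_integral_ge a b c z (r m M : R) (f : pt R -> R) : 0 < r -> 0 <= m ->
  (forall x, m <= f x <= M) -> [set y | enorm (psub y z) < r] `<=` tri a b c ->
  m * r ^+ 2 <= \int[@leb2 R]_(x in tri a b c) f x.
Proof.
move=> r0 m0 f_bd disc.
have f0 x : 0 <= f x by case/andP: (f_bd x) => /(le_trans m0).
have M0 : 0 <= M by case/andP: (f_bd z) => _; apply: le_trans.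
pose B : R := vert_bound a b c.
have B0 : 0 <= B by rewrite !addr_ge0.
pose square := `[z.1 - r / 2, z.1 + r / 2] `*` `[z.2 - r / 2, z.2 + r / 2].
pose box := `[- B, B] `*` `[- B, B].
suff /andP[] : m * r ^+ 2 <= fine (\int[@leb2 R]_(x in tri a b c) (f x)%:E)
               <= M * ((B - - B) * (B - - B)) by [].
apply: fine_bounds; rewrite EFinM.
- have <- : @leb2 R square = (r ^+ 2)%:E.
    by rewrite leb2_rectangle; [congr EFin; field | lra | lra].
  apply: cst_le_integral => //; first by apply: measurableX; apply: measurable_itv.
  + by move=> x sq; apply: disc; apply: (square_sub_disc r0).
  + by move=> x _; case/andP: (f_bd x).
- have <- : @leb2 R box = ((B - - B) * (B - - B))%:E by rewrite leb2_rectangle //; lra.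
  apply: integral_le_cst => //; first by apply: measurableX; apply: measurable_itv.
  + by move=> x /tri_bounded[x1 x2]; split; rewrite /= in_itv /= -ler_norml.
  + by move=> x _; rewrite f0; case/andP: (f_bd x).
Qed.

Lemma seg_int_bounds p q (f : pt R -> R) (M : R) :
  (forall x, 0 <= f x <= M) -> 0 <= seg_int p q f <= enorm (psub q p) * M.
Proof.
move=> f_bd; have f0 x : 0 <= f x by case/andP: (f_bd x).
have M0 : 0 <= M by case/andP: (f_bd p) => _; apply: le_trans.
rewrite /seg_int; set F := Rintegral _ _ _.
suff /andP[F0 FM] : 0 <= F <= M by rewrite mulr_ge0 ?ler_wpM2l ?sqrtr_ge0.
apply: fine_bounds.
- by apply: integral_ge0 => t _; rewrite lee_fin.
- have -> : M%:E = (M%:E * lebesgue_measure (`[0%R, 1%R] : set R))%E.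
    by rewrite lebesgue_measure_itv_cc ?ler01 // subr0 mule1.
  exact: integral_le_cst.
Qed.

End TriangleMetric.

Section TraceInequality.
Variable R : realType.

Lemma max_le_mul_min (x y k1 k2 : R) : 0 <= x -> 0 <= y -> 0 <= k1 -> 0 <= k2 ->
  x <= k1 * y -> y <= k2 * x -> Num.max x y <= (k1 + k2) * Num.min x y.
Proof.
move=> x0 y0 k10 k20 xy1 yx2; rewrite mulrDl.
have [_|_] := leP x y.
- by have := mulr_ge0 k10 x0; lra.
- by have := mulr_ge0 k20 y0; lra.
Qed.

Lemma gradnorm_sqr_bounds x0 n (Ap Am : 'M[R]_2) x :
  Num.min (frob2 Ap) (frob2 Am) <= gradnorm x0 n Ap Am x ^+ 2
  <= Num.max (frob2 Ap) (frob2 Am).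
Proof.
rewrite /gradnorm sqr_sqrtr ?frob2_ge0 // /gradv.
by case: ifP => _; rewrite ge_min le_max lexx ?orbT.
Qed.

Lemma sqrt_le_mul_invsqrt (S h I C : R) : 0 <= S -> 0 < h -> 0 <= C -> 0 <= I ->
  S * h <= C ^+ 2 * I -> Num.sqrt S <= C * (Num.sqrt h)^-1 * Num.sqrt I.
Proof.
move=> S0 h0 C0 I0 le_ShCI.
rewrite mulrAC ler_pdivlMr ?sqrtr_gt0 // -sqrtrM //.
by rewrite -(ger0_norm C0) -sqrtr_sqr -sqrtrM ?sqr_ge0 // ler_sqrt // mulr_ge0 ?sqr_ge0.
Qed.

Lemma L2bdT_le_L2T a b c (rho K m M : R) (f : pt R -> R) :
  tri_nondeg a b c -> 0 < rho -> hT a b c <= rho * rT a b c -> 1 <= K ->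
  0 <= m -> M <= K * m -> (forall x, m <= f x ^+ 2 <= M) ->
  L2bdT a b c f <= 5 * rho * K * (Num.sqrt (hT a b c))^-1 * L2T a b c f.
Proof.
move=> nd rho0 hr K1 m0 MKm f_bd.
have f2_bd x : 0 <= f x ^+ 2 <= M by rewrite sqr_ge0; case/andP: (f_bd x).
have M0 : 0 <= M by case/andP: (f2_bd a) => /le_trans; apply.
set h := hT a b c; have h0 : 0 < h := hT_gt0 nd.
rewrite /L2bdT /L2T; set S := (X in Num.sqrt X <= _).
have /andP[S0 S_le] : 0 <= S <= 6 * h * M.
  have /andP[ab0 ab] := seg_int_bounds a b f2_bd.
  have /andP[bc0 bc] := seg_int_bounds b c f2_bd.
  have /andP[ca0 ca] := seg_int_bounds c a f2_bd.
  have eab := ler_wpM2r M0 (edge_le_hT a b c).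
  have ebc := ler_wpM2r M0 (edge_le_hT b c a).
  have eca := ler_wpM2r M0 (edge_le_hT c a b).
  rewrite -(hT_rot a b c) in ebc; rewrite (hT_rot c a b) in eca.
  rewrite -/h in eab ebc eca; rewrite /S !addr_ge0 //=; lra.
have rT0 : 0 < rT a b c by rewrite -(pmulr_rgt0 _ rho0) (lt_le_trans h0).
have [r [z [rTr r0 disc]]] := rT_disc rT0.
have h_lt : h < 2 * rho * r by apply: (le_lt_trans hr); rewrite -mulrA mulrCA ltr_pM2l.
have := tri_integral_ge r0 m0 f_bd disc; set I := Rintegral _ _ _ => I_ge.
have I0 : 0 <= I by apply: le_trans I_ge; rewrite mulr_ge0 ?sqr_ge0.
have K0 : 0 <= K by apply: le_trans K1.
apply: sqrt_le_mul_invsqrt; rewrite ?mulr_ge0 ?(ltW rho0) //.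
have S_h : S * h <= rho ^+ 2 * K * (24 * (m * r ^+ 2)).
  apply: le_trans (ler_wpM2r (ltW h0) S_le) _.
  have -> : 6 * h * M * h = 6 * (M * h ^+ 2) by ring.
  have -> : rho ^+ 2 * K * (24 * (m * r ^+ 2)) = 6 * (K * m * (2 * rho * r) ^+ 2) by ring.
  by rewrite ler_wpM2l // ler_pM ?sqr_ge0 // !expr2 ler_pM ?(ltW h0) ?(ltW h_lt).
apply: (le_trans S_h).
have -> : (5 * rho * K) ^+ 2 * I = rho ^+ 2 * K * (25 * K * I) by ring.
by rewrite ler_wpM2l ?mulr_ge0 ?sqr_ge0 //; nra.
Qed.

End TraceInequality.

Unset Implicit Arguments.

Theorem lemma5p2 (R : realType) (rho mup mum : R) :
  0 < rho -> 0 < mup -> 0 < mum ->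
  exists C : R, 0 < C /\
    forall (a b c x0 n : pt R) (Ap : 'M[R]_2) (bp : pt R) (qp : R)
           (Am : 'M[R]_2) (bm : pt R) (qm : R),
      tri_nondeg a b c ->
      hT a b c <= rho * rT a b c ->
      dot n n = 1 ->
      Tplus a b c x0 n !=set0 ->
      Tminus a b c x0 n !=set0 ->
      IFE mup mum a b c x0 n Ap bp qp Am bm qm ->
      L2bdT a b c (gradnorm x0 n Ap Am)
        <= C * (Num.sqrt (hT a b c))^-1 * L2T a b c (gradnorm x0 n Ap Am).
Proof.
move=> rho0 mup0 mum0.
have kp := jump_ratio_ge2 mup mum; have km := jump_ratio_ge2 mum mup.
set K := jump_ratio mup mum + jump_ratio mum mup.
have K1 : 1 <= K by rewrite /K; lra.
exists (5 * rho * K); split; first by rewrite !mulr_gt0 // (lt_le_trans ltr01 K1).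
move=> a b c x0 n Ap bp qp Am bm qm nd hr n1 Tp Tm [eS cont trAB].
have eT := tangential_grad_eq nd Tp Tm cont.
have leA := frob2_le_jump_ratio mup0 n1 eS eT trAB.
have leB := frob2_le_jump_ratio mum0 n1 (esym eS) (esym eT) (esym trAB).
apply: (L2bdT_le_L2T nd rho0 hr K1 _ _ (gradnorm_sqr_bounds x0 n Ap Am)).
- by rewrite le_min !frob2_ge0.
- by apply: max_le_mul_min; rewrite ?frob2_ge0 ?(le_trans _ kp) ?(le_trans _ km).
Qed.
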